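(* Let $\nabla$ be a torsion-free connection on a surface $\Sigma$ whose Ricci tensor $\rho$ is skew-symmetric and nonzero everywhere. For any $1$-form $\xi$ on $\Sigma$, setting $\tau=\mathcal{L}\xi$, we have a) $Q^*\xi=\mathcal{Z}\tau$, and b) $\nabla\xi=\tau+[\xi(w)-2\mathcal{D}(\mathcal{B}\tau)]\,\rho/4$.
   Context: All objects are $C^\infty$. Killing operator: $(\mathcal{L}\xi)(u,v)=\tfrac12[(\nabla_u\xi)(v)+(\nabla_v\xi)(u)]$. $\nabla\xi$ denotes the 2-tensor $(u,v)\mapsto(\nabla_u\xi)(v)$. Since $\rho$ trivializes $\Lambda^2T^*\Sigma$, there is a unique 1-form $\phi$ with $\nabla_v\rho=\phi(v)\rho$ for all $v$, and a unique vector field $w$ with $\phi=\rho(w,\cdot)$. $Q:T\Sigma\to T\Sigma$ is the bundle morphism $Q(v)=4v+\nabla_v w+\tfrac34\phi(v)w$, and $Q^*$ is its dual, $Q^*\xi=\xi\circ Q$. For a symmetric 2-tensor $\tau$, $d^\nabla\tau$ is the 3-tensor $(d^\nabla\tau)(u,v,x)=(\nabla_u\tau)(v,x)-(\nabla_v\tau)(u,x)$, and $\mathcal{B}\tau$ is the 1-form with $[(\mathcal{B}\tau)(v)]\rho=(d^\nabla\tau)(\cdot,\cdot,v)$. For a 1-form $\xi$, $\mathcal{D}\xi$ is the function with $2(\mathcal{D}\xi)\rho=\xi\wedge\phi-d\xi$, where $(\xi\wedge\phi)(u,v)=\xi(u)\phi(v)-\phi(u)\xi(v)$ and $d\xi(u,v)=u(\xi(v))-v(\xi(u))-\xi([u,v])$.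 Finally $\mathcal{Z}\tau=2\,d[\mathcal{D}(\mathcal{B}\tau)]+4\mathcal{B}\tau-\tau(w,\cdot)+\tfrac32[\mathcal{D}(\mathcal{B}\tau)]\phi$. *)

(* The surface is modelled by a coordinate chart: an open set U of R^2 with
   coordinates (x^0, x^1) = (fst p, snd p).  All tensor fields are given by
   their components in the coordinate frame d/dx^0, d/dx^1. *)
From Stdlib Require Import Reals List.
From Coquelicot Require Import Coquelicot.
Open Scope R_scope.

Inductive I2 : Set := i0 | i1.

Definition sum2 (F : I2 -> R) : R := F i0 + F i1.

Definition delta (a b : I2) : R :=
  match a, b with i0, i0 => 1 | i1, i1 => 1 | _, _ => 0 end.

Definition scalar := R * R -> R.

Definition pd (i : I2) (f : scalar) (p : R * R) : R :=
  match i with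
  | i0 => Derive (fun t => f (t, snd p)) (fst p)
  | i1 => Derive (fun t => f (fst p, t)) (snd p)
  end.

Definition ex_pd (i : I2) (f : scalar) (p : R * R) : Prop :=
  match i with
  | i0 => ex_derive (fun t => f (t, snd p)) (fst p)
  | i1 => ex_derive (fun t => f (fst p, t)) (snd p)
  end.

Definition pds (l : list I2) (f : scalar) : scalar :=
  fold_right (fun i g => pd i g) f l.

Definition smooth_on (U : R * R -> Prop) (f : scalar) : Prop :=
  forall (l : list I2) (p : R * R), U p ->
    continuous (pds l f) p /\ (forall i, ex_pd i (pds l f) p).

(* Component types.  Christoffel symbols: Gam i j k = dx^k (nabla_{d_i} d_j). *)
Definition conn := I2 -> I2 -> I2 -> scalar.
Definition oneform := I2 -> scalar.
Definition vecfield := I2 -> scalar.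
Definition twotensor := I2 -> I2 -> scalar.

Definition torsion_free (U : R * R -> Prop) (G : conn) : Prop :=
  forall i j k p, U p -> G i j k p = G j i k p.

(* Curvature R(u,v) = nabla_u nabla_v - nabla_v nabla_u - nabla_[u,v]:
   Rm G i j k l p = dx^l (R(d_i, d_j) d_k). *)
Definition Rm (G : conn) (i j k l : I2) : scalar := fun p =>
  pd i (G j k l) p - pd j (G i k l) p
  + sum2 (fun m => G j k m p * G i m l p - G i k m p * G j m l p).

(* Ricci tensor rho(v, x) = trace (u |-> R(u, v) x). *)
Definition Ric (G : conn) : twotensor := fun j k p =>
  sum2 (fun i => Rm G i j k i p).

(* Covariant derivatives; the first index is the direction. *)
Definition nabla1 (G : conn) (xi : oneform) : twotensor := fun i j p =>
  pd i (xi j) p - sum2 (fun k => G i j k p * xi k p).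

Definition nabla2 (G : conn) (t : twotensor) : I2 -> twotensor := fun i a b p =>
  pd i (t a b) p
  - sum2 (fun k => G i a k p * t k b p + G i b k p * t a k p).

Definition nablav (G : conn) (v : vecfield) : I2 -> vecfield := fun i k p =>
  pd i (v k) p + sum2 (fun j => G i j k p * v j p).

Definition Killing (G : conn) (xi : oneform) : twotensor := fun a b p =>
  / 2 * (nabla1 G xi a b p + nabla1 G xi b a p).

Section Derived.
Variable G : conn.
Let rho := Ric G.

(* phi: the unique 1-form with nabla_v rho = phi(v) rho
   (solved using the trivializing component rho(d_0,d_1)). *)
Definition phi : oneform := fun i p => nabla2 G rho i i0 i1 p / rho i0 i1 p.

(* w: the unique vector field with rho(w, .) = phi (Cramer's rule for
   w^0 rho_{0k} + w^1 rho_{1k} = phi_k). *)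
Definition wvec : vecfield := fun k p =>
  let det := rho i0 i0 p * rho i1 i1 p - rho i0 i1 p * rho i1 i0 p in
  match k with
  | i0 => (phi i0 p * rho i1 i1 p - phi i1 p * rho i1 i0 p) / det
  | i1 => (rho i0 i0 p * phi i1 p - rho i0 i1 p * phi i0 p) / det
  end.

(* Q*xi = xi o Q, Q(v) = 4 v + nabla_v w + 3/4 phi(v) w. *)
Definition Qstar (xi : oneform) : oneform := fun a p =>
  sum2 (fun k => xi k p *
     (4 * delta a k + nablav G wvec a k p + 3 / 4 * phi a p * wvec k p)).

Definition dnabla (t : twotensor) (u v x : I2) : scalar := fun p =>
  nabla2 G t u v x p - nabla2 G t v u x p.

(* B tau: [(B tau)(v)] rho = (d^nabla tau)(.,.,v) *)
Definition Bop (t : twotensor) : oneform := fun x p =>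
  dnabla t i0 i1 x p / rho i0 i1 p.

Definition dform (xi : oneform) : twotensor := fun u v p =>
  pd u (xi v) p - pd v (xi u) p.

Definition wedge (xi eta : oneform) : twotensor := fun u v p =>
  xi u p * eta v p - eta u p * xi v p.

(* D xi: 2 (D xi) rho = xi /\ phi - d xi *)
Definition Dop (xi : oneform) : scalar := fun p =>
  (wedge xi phi i0 i1 p - dform xi i0 i1 p) / (2 * rho i0 i1 p).

Definition Zop (t : twotensor) : oneform := fun a p =>
  2 * pd a (Dop (Bop t)) p + 4 * Bop t a p
  - sum2 (fun k => t k a p * wvec k p)
  + 3 / 2 * Dop (Bop t) p * phi a p.

End Derived.

From Stdlib Require Import Reals List Lra.
From Coquelicot Require Import Coquelicot.
Open Scope R_scope.

(* Because rho is skew and nowhere zero, the skew part dxi/2 of nabla xi is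
   f rho for a function f (torsion-freeness), i.e. nabla xi = tau + f rho.
   Since nabla rho = phi (x) rho, differentiating gives
   nabla tau = nabla nabla xi - (df + f phi) (x) rho, and the Ricci identity
   for the skew part of nabla nabla xi turns this into B tau = xi + df + f phi.
   As d phi = 2 rho, this yields D(B tau) = (xi(w) - 4 f)/2, which is (b).
   Differentiating that identity, with rho(w, .) = phi, gives (a). *)

Lemma pd_plus i (f g : scalar) p : ex_pd i f p -> ex_pd i g p ->
  pd i (fun q => f q + g q) p = pd i f p + pd i g p.
Proof. destruct p, i; simpl; intros; apply Derive_plus; auto. Qed.

Lemma pd_minus i (f g : scalar) p : ex_pd i f p -> ex_pd i g p ->
  pd i (fun q => f q - g q) p = pd i f p - pd i g p.
Proof. destruct p, i; simpl; intros; apply Derive_minus; auto. Qed.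

Lemma pd_opp i (f : scalar) p : pd i (fun q => - f q) p = - pd i f p.
Proof. destruct i; simpl; apply Derive_opp. Qed.

Lemma pd_mult i (f g : scalar) p : ex_pd i f p -> ex_pd i g p ->
  pd i (fun q => f q * g q) p = pd i f p * g p + f p * pd i g p.
Proof. destruct p, i; simpl; intros; apply Derive_mult; auto. Qed.

Lemma pd_inv i (f : scalar) p : ex_pd i f p -> f p <> 0 ->
  pd i (fun q => / f q) p = - (pd i f p * (/ f p * / f p)).
Proof.
  intros Hf Hnz. destruct p, i; simpl in *; rewrite (Derive_inv _ _ Hf Hnz); field; auto.
Qed.

Lemma pd_div i (f g : scalar) p : ex_pd i f p -> ex_pd i g p -> g p <> 0 ->
  pd i (fun q => f q / g q) p = (pd i f p * g p - f p * pd i g p) / g p ^ 2.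
Proof. destruct p, i; simpl; intros; apply Derive_div; auto. Qed.

Lemma pd_const i c p : pd i (fun _ => c) p = 0.
Proof. destruct i; simpl; apply Derive_const. Qed.

Lemma ex_pd_plus i (f g : scalar) p : ex_pd i f p -> ex_pd i g p ->
  ex_pd i (fun q => f q + g q) p.
Proof. destruct p, i; intros Hf Hg; exact (ex_derive_plus _ _ _ Hf Hg). Qed.

Lemma ex_pd_opp i (f : scalar) p : ex_pd i f p -> ex_pd i (fun q => - f q) p.
Proof. destruct p, i; intros Hf; exact (ex_derive_opp _ _ Hf). Qed.

Lemma ex_pd_mult i (f g : scalar) p : ex_pd i f p -> ex_pd i g p ->
  ex_pd i (fun q => f q * g q) p.
Proof. destruct p, i; intros Hf Hg; exact (ex_derive_mult _ _ _ Hf Hg). Qed.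

Lemma ex_pd_inv i (f : scalar) p : ex_pd i f p -> f p <> 0 ->
  ex_pd i (fun q => / f q) p.
Proof. destruct p, i; intros Hf Hnz; exact (ex_derive_inv _ _ Hf Hnz). Qed.

Lemma ex_pd_const i c p : ex_pd i (fun _ => c) p.
Proof. destruct i; simpl; apply ex_derive_const. Qed.

Section OpenDomain.
Variable U : R * R -> Prop.
Hypothesis HU : open U.

Lemma open_line i p : U p ->
  locally (match i with i0 => fst p | i1 => snd p end)
    (fun t => U (match i with i0 => (t, snd p) | i1 => (fst p, t) end)).
Proof.
  intros Hp. destruct (HU p Hp) as [e He]. exists e.
  destruct i; intros t Ht; apply He; split; try exact Ht; apply ball_center.
Qed.

Lemma pd_ext_on i (f g : scalar) p : U p -> (forall q, U q -> f q = g q) ->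
  pd i f p = pd i g p.
Proof.
  intros Hp Hfg. pose proof (open_line i p Hp) as Hline.
  destruct i; apply Derive_ext_loc; exact (filter_imp _ _ (fun t Ht => Hfg _ Ht) Hline).
Qed.

Lemma ex_pd_ext_on i (f g : scalar) p : U p -> (forall q, U q -> f q = g q) ->
  ex_pd i f p -> ex_pd i g p.
Proof.
  intros Hp Hfg. pose proof (open_line i p Hp) as Hline.
  destruct i; apply ex_derive_ext_loc; exact (filter_imp _ _ (fun t Ht => Hfg _ Ht) Hline).
Qed.

Lemma continuous_ext_on (f g : scalar) p : U p -> (forall q, U q -> f q = g q) ->
  continuous f p -> continuous g p.
Proof.
  intros Hp Hfg. apply continuous_ext_loc.
  exact (filter_imp _ _ (fun q Hq => Hfg q Hq) (HU p Hp)).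
Qed.

(* C^k on [U], by recursion on k through the first partials: unlike
   [smooth_on], this form is closed under products by a direct induction. *)
Fixpoint Ck (n : nat) (f : scalar) : Prop :=
  (forall q, U q -> continuous f q) /\
  match n with
  | O => True
  | S m => (forall i q, U q -> ex_pd i f q) /\ (forall i, Ck m (pd i f))
  end.

Lemma Ck_continuous n f q : Ck n f -> U q -> continuous f q.
Proof. destruct n; intros [Hc _]; apply Hc. Qed.

Lemma Ck_S n f : Ck (S n) f -> Ck n f.
Proof.
  revert f; induction n as [|n IH]; intros f [Hc [He Hd]]; split; auto.
Qed.

Lemma Ck_ext n : forall f g, (forall q, U q -> f q = g q) -> Ck n f -> Ck n g.
Proof.
  induction n as [|n IH]; intros f g Hfg [Hc Hd]; split;
    try (intros q Hq; exact (continuous_ext_on f g q Hq Hfg (Hc q Hq))); auto.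
  destruct Hd as [He Hd]; split.
  - intros i q Hq. exact (ex_pd_ext_on i f g q Hq Hfg (He i q Hq)).
  - intros i. apply (IH (pd i f)); auto. intros q Hq. exact (pd_ext_on i f g q Hq Hfg).
Qed.

Lemma Ck_const n c : Ck n (fun _ => c).
Proof.
  revert c; induction n as [|n IH]; intros c;
    split; auto using continuous_const.
  split; auto using ex_pd_const.
  intros i. apply (Ck_ext n (fun _ => 0)); auto. intros q _. symmetry. apply pd_const.
Qed.

Lemma Ck_plus n : forall f g, Ck n f -> Ck n g -> Ck n (fun q => f q + g q).
Proof.
  induction n as [|n IH]; intros f g Hf Hg; split;
    try (intros q Hq; apply (continuous_plus f g); eapply Ck_continuous; eauto); auto.
  destruct Hf as [_ [Hfe Hfd]], Hg as [_ [Hge Hgd]]. split.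
  - intros i q Hq. apply ex_pd_plus; auto.
  - intros i. apply (Ck_ext n (fun q => pd i f q + pd i g q)); auto.
    intros q Hq. symmetry. apply pd_plus; auto.
Qed.

Lemma Ck_opp n : forall f, Ck n f -> Ck n (fun q => - f q).
Proof.
  induction n as [|n IH]; intros f Hf; split;
    try (intros q Hq; apply (continuous_opp f); eapply Ck_continuous; eauto); auto.
  destruct Hf as [_ [Hfe Hfd]]. split.
  - intros i q Hq. apply ex_pd_opp; auto.
  - intros i. apply (Ck_ext n (fun q => - pd i f q)); auto.
    intros q _. symmetry. apply pd_opp.
Qed.

Lemma Ck_mult n : forall f g, Ck n f -> Ck n g -> Ck n (fun q => f q * g q).
Proof.
  induction n as [|n IH]; intros f g Hf Hg; split;
    try (intros q Hq; apply (continuous_mult f g); eapply Ck_continuous; eauto); auto.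
  pose proof (Ck_S _ _ Hf) as Hf'. pose proof (Ck_S _ _ Hg) as Hg'.
  destruct Hf as [_ [Hfe Hfd]], Hg as [_ [Hge Hgd]]. split.
  - intros i q Hq. apply ex_pd_mult; auto.
  - intros i. apply (Ck_ext n (fun q => pd i f q * g q + f q * pd i g q)).
    + intros q Hq. symmetry. apply pd_mult; auto.
    + apply Ck_plus; auto.
Qed.

Lemma Ck_inv n : forall f, Ck n f -> (forall q, U q -> f q <> 0) -> Ck n (fun q => / f q).
Proof.
  induction n as [|n IH]; intros f Hf Hnz; split;
    try (intros q Hq; apply (continuous_comp f Rinv);
         [eapply Ck_continuous; eauto | apply continuous_Rinv; auto]); auto.
  pose proof (Ck_S _ _ Hf) as Hf'.
  destruct Hf as [_ [Hfe Hfd]]. split.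
  - intros i q Hq. apply ex_pd_inv; auto.
  - intros i. apply (Ck_ext n (fun q => - (pd i f q * (/ f q * / f q)))).
    + intros q Hq. symmetry. apply pd_inv; auto.
    + apply Ck_opp, Ck_mult, Ck_mult; auto.
Qed.

Definition Cinf (f : scalar) : Prop := forall n, Ck n f.

Lemma smooth_on_Cinf f : smooth_on U f -> Cinf f.
Proof.
  intros Hs n. enough (H : forall l, Ck n (pds l f)) by exact (H nil).
  induction n as [|n IH]; intros l; repeat split; intros; try apply Hs; auto.
  exact (IH (i :: l)).
Qed.

Lemma Cinf_ext (f g : scalar) : (forall q, U q -> f q = g q) -> Cinf f -> Cinf g.
Proof. intros Hfg Hf n. exact (Ck_ext n f g Hfg (Hf n)). Qed.

Lemma Cinf_const c : Cinf (fun _ => c).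
Proof. intros n. apply Ck_const. Qed.

Lemma Cinf_plus (f g : scalar) : Cinf f -> Cinf g -> Cinf (fun q => f q + g q).
Proof. intros Hf Hg n. apply Ck_plus; auto. Qed.

Lemma Cinf_opp (f : scalar) : Cinf f -> Cinf (fun q => - f q).
Proof. intros Hf n. apply Ck_opp; auto. Qed.

Lemma Cinf_minus (f g : scalar) : Cinf f -> Cinf g -> Cinf (fun q => f q - g q).
Proof. intros Hf Hg. apply Cinf_plus, Cinf_opp; auto. Qed.

Lemma Cinf_mult (f g : scalar) : Cinf f -> Cinf g -> Cinf (fun q => f q * g q).
Proof. intros Hf Hg n. apply Ck_mult; auto. Qed.

Lemma Cinf_div (f g : scalar) : Cinf f -> Cinf g -> (forall q, U q -> g q <> 0) ->
  Cinf (fun q => f q / g q).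
Proof. intros Hf Hg Hnz. apply Cinf_mult; auto. intros n. apply Ck_inv; auto. Qed.

Lemma Cinf_pd i (f : scalar) : Cinf f -> Cinf (pd i f).
Proof. intros Hf n. apply (Hf (S n)). Qed.

Lemma Cinf_ex_pd i (f : scalar) q : Cinf f -> U q -> ex_pd i f q.
Proof. intros Hf Hq. apply (Hf 1%nat); auto. Qed.

Lemma Cinf_continuous (f : scalar) q : Cinf f -> U q -> continuous f q.
Proof. intros Hf. apply (Hf O). Qed.

Lemma pd_comm (f : scalar) p : Cinf f -> U p -> pd i0 (pd i1 f) p = pd i1 (pd i0 f) p.
Proof.
  intros Hf Hp. destruct p as [x y]. simpl.
  apply (Schwarz (fun u v => f (u, v)) x y).
  - destruct (HU _ Hp) as [e He]. exists e. intros u v Hu Hv.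
    assert (Huv : U (u, v)) by (apply He; split; assumption).
    repeat split.
    + exact (Cinf_ex_pd i0 f _ Hf Huv).
    + exact (Cinf_ex_pd i1 f _ Hf Huv).
    + exact (Cinf_ex_pd i0 _ _ (Cinf_pd i1 f Hf) Huv).
    + exact (Cinf_ex_pd i1 _ _ (Cinf_pd i0 f Hf) Huv).
  - apply continuity_2d_pt_filterlim.
    exact (Cinf_continuous _ _ (Cinf_pd i0 _ (Cinf_pd i1 f Hf)) Hp).
  - apply continuity_2d_pt_filterlim.
    exact (Cinf_continuous _ _ (Cinf_pd i1 _ (Cinf_pd i0 f Hf)) Hp).
Qed.

End OpenDomain.

Lemma pd_pairing (G : conn) (xi : oneform) (v : vecfield) i p :
  (forall k, ex_pd i (xi k) p) -> (forall k, ex_pd i (v k) p) ->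
  pd i (fun q => sum2 (fun k => xi k q * v k q)) p =
  sum2 (fun k => nabla1 G xi i k p * v k p + xi k p * nablav G v i k p).
Proof.
  intros Hxi Hv. unfold sum2.
  rewrite pd_plus, !pd_mult by auto using ex_pd_mult.
  unfold nabla1, nablav, sum2. ring.
Qed.

Create HintDb cinf.
#[export] Hint Resolve Cinf_const Cinf_plus Cinf_minus Cinf_opp Cinf_mult Cinf_pd : cinf.

Section SkewRicci.
Variables (U : R * R -> Prop) (G : conn).
Hypothesis HU : open U.
Hypothesis HG : forall i j k, Cinf U (G i j k).
Hypothesis Htf : torsion_free U G.
Hypothesis Hskew : forall j k p, U p -> Ric G j k p = - Ric G k j p.
Hypothesis Hnz : forall p, U p -> Ric G i0 i1 p <> 0.

#[local] Hint Resolve HG : cinf.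

Lemma Ric_diag a q : U q -> Ric G a a q = 0.
Proof. intros Hq. pose proof (Hskew a a q Hq). lra. Qed.

Lemma Ric10 q : U q -> Ric G i1 i0 q = - Ric G i0 i1 q.
Proof. apply Hskew. Qed.

Lemma Cinf_Ric j k : Cinf U (Ric G j k).
Proof. unfold Ric, Rm, sum2. eauto 30 with cinf. Qed.

Lemma pd_Ric_diag i a q : U q -> pd i (Ric G a a) q = 0.
Proof. intros Hq. rewrite (pd_ext_on U HU i _ (fun _ => 0)); auto using Ric_diag, pd_const. Qed.

Lemma pd_Ric10 i q : U q -> pd i (Ric G i1 i0) q = - pd i (Ric G i0 i1) q.
Proof.
  intros Hq. rewrite (pd_ext_on U HU i _ (fun q => - Ric G i0 i1 q)); auto using Ric10, pd_opp.
Qed.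

Lemma phiE i q : U q ->
  phi G i q = pd i (Ric G i0 i1) q / Ric G i0 i1 q - (G i i0 i0 q + G i i1 i1 q).
Proof.
  intros Hq. pose proof (Hnz q Hq). unfold phi, nabla2, sum2.
  rewrite ?Ric_diag, ?Ric10 by auto. field. auto.
Qed.

Lemma Cinf_phi i : Cinf U (phi G i).
Proof.
  apply (Cinf_ext U HU _ _ (fun q Hq => eq_sym (phiE i q Hq))).
  apply Cinf_minus; auto with cinf. apply Cinf_div; auto using Cinf_Ric with cinf.
Qed.

Lemma nabla2_Ric i a b q : U q -> nabla2 G (Ric G) i a b q = phi G i q * Ric G a b q.
Proof.
  intros Hq. pose proof (Hnz q Hq). rewrite phiE by auto.
  destruct a, b; unfold nabla2, sum2;
    rewrite ?pd_Ric_diag, ?pd_Ric10, ?Ric_diag, ?Ric10 by auto; field; auto.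
Qed.

Lemma pd_Ric i a b q : U q -> pd i (Ric G a b) q =
  phi G i q * Ric G a b q + sum2 (fun k => G i a k q * Ric G k b q + G i b k q * Ric G a k q).
Proof. intros Hq. rewrite <- nabla2_Ric by auto. unfold nabla2. ring. Qed.

Lemma wvec0E q : U q -> wvec G i0 q = phi G i1 q / Ric G i0 i1 q.
Proof.
  intros Hq. pose proof (Hnz q Hq). unfold wvec. cbv zeta.
  rewrite !Ric_diag, Ric10 by auto. field. auto.
Qed.

Lemma wvec1E q : U q -> wvec G i1 q = - phi G i0 q / Ric G i0 i1 q.
Proof.
  intros Hq. pose proof (Hnz q Hq). unfold wvec. cbv zeta.
  rewrite !Ric_diag, Ric10 by auto. field. auto.
Qed.

Lemma Ric_wvec a q : U q -> sum2 (fun k => wvec G k q * Ric G k a q) = phi G a q.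
Proof.
  intros Hq. pose proof (Hnz q Hq). unfold sum2. rewrite wvec0E, wvec1E by auto.
  destruct a; rewrite ?Ric_diag, ?Ric10 by auto; field; auto.
Qed.

Lemma Cinf_wvec k : Cinf U (wvec G k).
Proof.
  destruct k.
  - apply (Cinf_ext U HU _ _ (fun q Hq => eq_sym (wvec0E q Hq))).
    apply Cinf_div; auto using Cinf_phi, Cinf_Ric.
  - apply (Cinf_ext U HU _ _ (fun q Hq => eq_sym (wvec1E q Hq))).
    apply Cinf_div; auto using Cinf_phi, Cinf_Ric with cinf.
Qed.

(* [phi] is [d log rho01] minus the trace of the connection, and the
   curl of that trace is the skew part [rho01 - rho10] of the Ricci tensor. *)
Lemma curl_phi q : U q ->
  pd i0 (phi G i1) q - pd i1 (phi G i0) q = 2 * Ric G i0 i1 q.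
Proof.
  intros Hq. pose proof (Hnz q Hq).
  assert (Hskew_part : Ric G i0 i1 q - Ric G i1 i0 q =
     pd i1 (G i0 i0 i0) q + pd i1 (G i0 i1 i1) q
     - pd i0 (G i1 i0 i0) q - pd i0 (G i1 i1 i1) q)
    by (unfold Ric, Rm, sum2; ring).
  rewrite (pd_ext_on U HU i0 (phi G i1) _ q Hq (fun q Hq => phiE i1 q Hq)).
  rewrite (pd_ext_on U HU i1 (phi G i0) _ q Hq (fun q Hq => phiE i0 q Hq)).
  pose proof (Cinf_Ric i0 i1) as HR.
  assert (Hex : forall i f, Cinf U f -> ex_pd i f q) by (intros; apply (Cinf_ex_pd U); auto).
  rewrite !pd_minus, !pd_div, !pd_plus;
    auto using Cinf_div, Cinf_pd with cinf.
  rewrite (pd_comm U HU _ q HR Hq).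
  replace (2 * Ric G i0 i1 q) with (Ric G i0 i1 q - Ric G i1 i0 q) by (rewrite Ric10; auto; ring).
  rewrite Hskew_part. field. auto.
Qed.

Variable xi : oneform.
Hypothesis Hxi : forall k, Cinf U (xi k).

#[local] Hint Resolve Hxi Cinf_Ric Cinf_phi Cinf_wvec : cinf.

Definition skew_coef : scalar := fun q => dform xi i0 i1 q / (2 * Ric G i0 i1 q).

Lemma Cinf_skew_coef : Cinf U skew_coef.
Proof. apply Cinf_div; unfold dform; auto with cinf. Qed.

Lemma Cinf_nabla1 a b : Cinf U (nabla1 G xi a b).
Proof. unfold nabla1, sum2. eauto 10 with cinf. Qed.

#[local] Hint Resolve Cinf_skew_coef Cinf_nabla1 : cinf.

Lemma dform_skew_coef q : U q ->
  pd i0 (xi i1) q = pd i1 (xi i0) q + 2 * skew_coef q * Ric G i0 i1 q.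
Proof. intros Hq. pose proof (Hnz q Hq). unfold skew_coef, dform. field. auto. Qed.

Lemma nabla1_split a b q : U q ->
  nabla1 G xi a b q = Killing G xi a b q + skew_coef q * Ric G a b q.
Proof.
  intros Hq. pose proof (Hnz q Hq).
  destruct a, b; unfold Killing, nabla1, skew_coef, dform, sum2;
    rewrite ?Ric_diag, ?Ric10, ?(Htf i1 i0 i0 q), ?(Htf i1 i0 i1 q) by auto; field; auto.
Qed.

Lemma nabla2_Killing i a b q : U q ->
  nabla2 G (Killing G xi) i a b q =
  nabla2 G (nabla1 G xi) i a b q - (pd i skew_coef q + skew_coef q * phi G i q) * Ric G a b q.
Proof.
  intros Hq. unfold nabla2, sum2.
  assert (HK : forall a b q, U q ->
    Killing G xi a b q = nabla1 G xi a b q - skew_coef q * Ric G a b q)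
    by (intros; rewrite nabla1_split by auto; ring).
  rewrite (pd_ext_on U HU i _ _ q Hq (HK a b)).
  rewrite pd_minus, pd_mult by (apply (Cinf_ex_pd U); eauto 10 with cinf).
  rewrite !HK, pd_Ric by auto. unfold sum2. ring.
Qed.

Lemma ricci_identity x q : U q ->
  nabla2 G (nabla1 G xi) i0 i1 x q - nabla2 G (nabla1 G xi) i1 i0 x q =
  Ric G i0 x q * xi i1 q - Ric G i1 x q * xi i0 q.
Proof.
  intros Hq. unfold nabla2, nabla1, sum2.
  rewrite !pd_minus, !pd_plus, !pd_mult by (apply (Cinf_ex_pd U); eauto 10 with cinf).
  rewrite (pd_comm U HU (xi x) q (Hxi x) Hq).
  unfold Ric, Rm, sum2. rewrite ?(Htf i1 i0 i0 q), ?(Htf i1 i0 i1 q) by auto. ring.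
Qed.

Lemma Bop_Killing x q : U q ->
  Bop G (Killing G xi) x q = xi x q + pd x skew_coef q + skew_coef q * phi G x q.
Proof.
  intros Hq. pose proof (Hnz q Hq). unfold Bop, dnabla.
  rewrite !nabla2_Killing by auto.
  pose proof (ricci_identity x q Hq) as Hri.
  replace (nabla2 G (nabla1 G xi) i0 i1 x q) with
    (nabla2 G (nabla1 G xi) i1 i0 x q + (Ric G i0 x q * xi i1 q - Ric G i1 x q * xi i0 q))
    by lra.
  destruct x; rewrite ?Ric_diag, ?Ric10 by auto; field; auto.
Qed.

Lemma Dop_Bop_Killing q : U q ->
  Dop G (Bop G (Killing G xi)) q =
  (sum2 (fun k => xi k q * wvec G k q) - 4 * skew_coef q) / 2.
Proof.
  intros Hq. pose proof (Hnz q Hq). unfold Dop, wedge, dform, sum2.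
  rewrite (pd_ext_on U HU i0 _ _ q Hq (Bop_Killing i1)),
          (pd_ext_on U HU i1 _ _ q Hq (Bop_Killing i0)), !Bop_Killing by auto.
  rewrite !pd_plus, !pd_mult by (apply (Cinf_ex_pd U); eauto 10 with cinf).
  rewrite (pd_comm U HU skew_coef q Cinf_skew_coef Hq).
  pose proof (curl_phi q Hq) as Hcurl.
  replace (pd i0 (phi G i1) q) with (pd i1 (phi G i0) q + 2 * Ric G i0 i1 q) by lra.
  rewrite dform_skew_coef, wvec0E, wvec1E by auto.
  field; auto.
Qed.

Lemma Qstar_Killing a p : U p -> Qstar G xi a p = Zop G (Killing G xi) a p.
Proof.
  intros Hp. pose proof (Hnz p Hp).
  assert (Hex : forall f, Cinf U f -> ex_pd a f p) by (intros; apply (Cinf_ex_pd U); auto).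
  assert (HdD : pd a (Dop G (Bop G (Killing G xi))) p =
     (pd a (fun q => sum2 (fun k => xi k q * wvec G k q)) p - 4 * pd a skew_coef p) / 2).
  { rewrite (pd_ext_on U HU a _ _ p Hp Dop_Bop_Killing).
    rewrite pd_div, pd_minus, pd_mult, !pd_const
      by (unfold sum2; first [lra | auto using ex_pd_const with cinf]).
    field. }
  assert (Hphi : phi G a p = - sum2 (fun k => Ric G a k p * wvec G k p)).
  { rewrite <- Ric_wvec by auto. unfold sum2. rewrite (Hskew a i0), (Hskew a i1) by auto. ring. }
  unfold Zop. rewrite HdD, (pd_pairing G), Bop_Killing, Dop_Bop_Killing by auto with cinf.
  unfold Qstar, nablav, sum2 in *. rewrite Hphi, !nabla1_split by auto.
  (* The [tau] terms cancel by symmetry of [Killing], the [skew_coef] ones by [Hphi]. *)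
  unfold Killing, delta. destruct a; field.
Qed.

End SkewRicci.

Theorem lemma12p1 (U : R * R -> Prop) (G : conn) (xi : oneform) :
  open U ->
  (forall i j k, smooth_on U (G i j k)) ->
  torsion_free U G ->
  (forall j k p, U p -> Ric G j k p = - Ric G k j p) ->
  (forall p, U p -> Ric G i0 i1 p <> 0) ->
  (forall k, smooth_on U (xi k)) ->
  let tau := Killing G xi in
  forall p, U p ->
    (forall a, Qstar G xi a p = Zop G tau a p) /\
    (forall a b, nabla1 G xi a b p =
        tau a b p
        + (sum2 (fun k => xi k p * wvec G k p) - 2 * Dop G (Bop G tau) p)
          * Ric G a b p / 4).
Proof.
  intros HU HG Htf Hskew Hnz Hxi tau p Hp.
  assert (HGinf : forall i j k, Cinf U (G i j k)) by (intros; apply smooth_on_Cinf; auto).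
  assert (Hxiinf : forall k, Cinf U (xi k)) by (intros; apply smooth_on_Cinf; auto).
  split.
  - intros a. apply (Qstar_Killing U); auto.
  - intros a b. unfold tau.
    rewrite (Dop_Bop_Killing U), (nabla1_split U) by auto.
    field.
Qed.
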